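(* Let $\Delta_{\mathrm{MSE}}(\epsilon,B)$ be a real function of noise strength $\epsilon>0$ and shot budget $B>0$, and suppose that in a neighborhood of $\epsilon=0$ \[ \Delta_{\mathrm{MSE}}(\epsilon,B)=D_p\epsilon^{2p}-\frac{K_q\epsilon^q}{B}+R_p(\epsilon,B), \] with $D_p>0$, $K_q>0$, $p\ge1$, $q\ge0$, where the remainder satisfies $R_p(\epsilon,B)=O(\epsilon^{2p+\delta_b})+O(\epsilon^{q+\delta_v}/B)$ for some $\delta_b,\delta_v>0$ (uniformly in $B$), and, in case (i) below, with $r=1/(2p-q)$, the rescaled remainder $\eta_B(x)=B^{2pr}R_p(xB^{-r},B)$ and its $x$-derivative converge to $0$ uniformly on compact subsets of $(0,\infty)$ as $B\to\infty$. (i) If $0\le q<2p$, let $C_{p,q}=(K_q/D_p)^{1/(2p-q)}$. Then for any fixed $0<m<C_{p,q}<M<\infty$ and all sufficiently large $B$ there is a unique sign-changing local crossing $\epsilon^*_{\mathrm{loc}}(B)$ of $\Delta_{\mathrm{MSE}}(\cdot,B)$ in the window $\{xB^{-1/(2p-q)}:x\in[m,M]\}$, and \[ \frac{\epsilon^*_{\mathrm{loc}}(B)}{C_{p,q}B^{-1/(2p-q)}}\to1\qquad(B\to\infty). \] Moreover, for $\epsilon=xB^{-1/(2p-q)}$ with $x$ ranging in any compact subset of $(0,\infty)$ not containing $C_{p,q}$, for all sufficiently large $B$ one has $\Delta_{\mathrm{MSE}}(\epsilon,B)<0$ when $x<C_{p,q}$ and $\Delta_{\mathrm{MSE}}(\epsilon,B)>0$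 when $x>C_{p,q}$. If the convergence of $\eta_B$ and $\eta_B'$ holds at rate $O(B^{-\eta})$, then \[ \epsilon^*_{\mathrm{loc}}(B)=C_{p,q}B^{-1/(2p-q)}\left[1+O(B^{-\eta})\right]. \] (ii) If $q=2p$, then $\Delta_{\mathrm{MSE}}(\epsilon,B)=(D_p-K_q/B)\epsilon^{2p}+o(\epsilon^{2p})$, so no lower boundary $\epsilon^*(B)\to0$ arises from the leading balance; with $B^*=K_q/D_p$, for $B>B^*$ one has $\Delta_{\mathrm{MSE}}(\epsilon,B)>0$ for all sufficiently small $\epsilon>0$, and for $B<B^*$ one has $\Delta_{\mathrm{MSE}}(\epsilon,B)<0$ for all sufficiently small $\epsilon>0$ (the case $B=B^*$ being decided by higher-order terms). (iii) If $q>2p$, then for each sufficiently large fixed $B$, $\Delta_{\mathrm{MSE}}(\epsilon,B)>0$ for all sufficiently small $\epsilon>0$ (unless higher-order terms outside the displayed leading balance change the sign); in particular no leading-order shrinking lower boundary arises.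
   Context: In the application, $\Delta_{\mathrm{MSE}}(\epsilon,B)=\mathrm{MSE}_{\mathrm{noisy}}(\epsilon,B)-\mathrm{MSE}_{\mathrm{ZNE}}(\epsilon,B)$, the difference of mean-squared errors $\mathbb E[(\widehat\mu-\mu_0)^2]$ (about the ideal value $\mu_0$) of an unmitigated estimator and a zero-noise-extrapolation estimator, each using total shot budget $B$ at physical noise strength $\epsilon$; $\Delta_{\mathrm{MSE}}>0$ means ZNE helps. $D_p\epsilon^{2p}$ is the leading squared-bias improvement and $K_q\epsilon^q/B$ the leading excess-variance penalty. A ''sign-changing local crossing'' is a zero of $\Delta_{\mathrm{MSE}}(\cdot,B)$ across which it changes sign. *)

From Stdlib Require Import Reals.
From Coquelicot Require Import Coquelicot.
Open Scope R_scope.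

Definition leading (D K p q eps B : R) : R :=
  D * Rpower eps (2 * p) - K * Rpower eps q / B.

Definition remainder (Delta : R -> R -> R) (D K p q eps B : R) : R :=
  Delta eps B - leading D K p q eps B.

Definition rexp (p q : R) : R := / (2 * p - q).

Definition eta_resc (Delta : R -> R -> R) (D K p q B x : R) : R :=
  Rpower B (2 * p * rexp p q) *
    remainder Delta D K p q (x * Rpower B (- rexp p q)) B.

Definition Cpq (D K p q : R) : R := Rpower (K / D) (rexp p q).

Definition sign_changing_crossing (f : R -> R) (e : R) : Prop :=
  f e = 0 /\
  exists d, 0 < d /\
    ((forall t, e - d < t < e -> f t < 0) /\ (forall t, e < t < e + d -> 0 < f t)
     \/ (forall t, e - d < t < e -> 0 < f t) /\ (forall t, e < t < e + d -> f t < 0)).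

From Stdlib Require Import Reals Lra IndefiniteDescription.
From Coquelicot Require Import Coquelicot.
Open Scope R_scope.

(* Near [eps = 0], [Delta eps B = eps^(2p) (D - K/B eps^(q-2p) + o(1))] for fixed [B].
   When [q >= 2p] the bracket tends to [D - K/B] (if [q = 2p]) or to [D] (if [q > 2p]),
   and its sign is the sign of [Delta] near [0].
   When [q < 2p], substituting [eps = x B^(-r)], [r = 1/(2p-q)], turns
   [B^(2pr) Delta] into [g x + eta_B x] with [g x = D x^(2p) - K x^q]. The balance [g]
   vanishes only at [C = Cpq D K p q] on [(0, oo)], is negative below [C], positive above
   it, and increasing with slope bounded below on a neighbourhood [[a, M]] of [C].
   A perturbation [eta_B] that is small together with its derivative therefore leaves
   exactly one sign change in [[m, M]], an upward one, at distance at most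
   [|eta_B| / slope] from [C]. Undoing the substitution gives [epsloc B] and the
   convergence of [epsloc B / (C B^(-r))] to [1], at the rate of [eta_B]. *)

Lemma Rpower_pos x y : 0 < Rpower x y.
Proof. apply exp_pos. Qed.

Lemma Rpower_ge_min_endpoints a b c x : 0 < a -> a <= x <= b ->
  Rmin (Rpower a c) (Rpower b c) <= Rpower x c.
Proof.
  intros Ha Hx. destruct (Rle_lt_dec 0 c) as [Hc | Hc].
  - eapply Rle_trans; [apply Rmin_l |]. apply Rle_Rpower_l; lra.
  - eapply Rle_trans; [apply Rmin_r |].
    replace c with (- - c) by ring. rewrite !(Rpower_Ropp _ (- c)).
    apply Rinv_le_contravar; [apply Rpower_pos | apply Rle_Rpower_l; lra].
Qed.

Lemma at_right_0_iff (P : R -> Prop) :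
  at_right 0 P <-> exists e0, 0 < e0 /\ forall x, 0 < x < e0 -> P x.
Proof.
  split.
  - intros [d Hd]. exists d; split; [apply cond_pos |].
    intros x Hx. apply Hd; [| lra].
    change (Rabs (x - 0) < d). rewrite Rminus_0_r, Rabs_pos_eq; lra.
  - intros [e0 [He0 HP]]. exists (mkposreal e0 He0). intros x Hx Hx0.
    change (Rabs (x - 0) < e0) in Hx. rewrite Rminus_0_r, Rabs_pos_eq in Hx by lra.
    apply HP; lra.
Qed.

Lemma Rpower_small_near_0 c a e : 0 <= c -> 0 < a -> 0 < e ->
  at_right 0 (fun x => c * Rpower x a < e).
Proof.
  intros Hc Ha He. apply at_right_0_iff.
  exists (Rpower (e / (c + 1)) (/ a)). split; [apply Rpower_pos |]. intros x Hx.
  assert (Hxa : Rpower x a < e / (c + 1)).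
  { replace (e / (c + 1)) with (Rpower (Rpower (e / (c + 1)) (/ a)) a).
    - apply Rlt_Rpower_l; lra.
    - rewrite Rpower_mult, Rinv_l, Rpower_1 by (try apply Rdiv_lt_0_compat; lra).
      reflexivity. }
  apply (Rmult_lt_compat_l (c + 1)) in Hxa; [| lra].
  replace ((c + 1) * (e / (c + 1))) with e in Hxa by (field; lra).
  pose proof (Rpower_pos x a). nra.
Qed.

Lemma increment_ge_of_derive_ge (f f' : R -> R) a b c x y :
  (forall t, a <= t <= b -> is_derive f t (f' t)) ->
  (forall t, a <= t <= b -> c <= f' t) ->
  a <= x <= y -> y <= b -> c * (y - x) <= f y - f x.
Proof.
  intros Hf Hc Hxy Hyb. destruct (Req_dec x y) as [<- | Hne]; [lra |].
  destruct (MVT_cor3 f f' x y) as [t [Ht1 [Ht2 ->]]]; [lra | |].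
  - intros t Ht1 Ht2. apply is_derive_Reals, Hf. lra.
  - assert (c <= f' t) by (apply Hc; lra). nra.
Qed.

Definition crosses_upward (f : R -> R) (a z b : R) : Prop :=
  (forall x, a <= x < z -> f x < 0) /\ f z = 0 /\ (forall x, z < x <= b -> 0 < f x).

Lemma crosses_upward_sign_changing f a z b : a < z < b ->
  crosses_upward f a z b -> sign_changing_crossing f z.
Proof.
  intros Hz [Hl [H0 Hr]]. split; [assumption |].
  exists (Rmin (z - a) (b - z)). split; [apply Rmin_pos; lra |].
  pose proof (Rmin_l (z - a) (b - z)). pose proof (Rmin_r (z - a) (b - z)).
  left. split; intros t Ht; [apply Hl | apply Hr]; lra.
Qed.

Lemma crosses_upward_unique f a z b e : crosses_upward f a z b ->
  a <= e <= b -> f e = 0 -> e = z.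
Proof.
  intros [Hl [_ Hr]] He Hfe.
  destruct (Rtotal_order e z) as [Hlt | [Heq | Hgt]]; [| assumption |].
  - assert (f e < 0) by (apply Hl; lra). lra.
  - assert (0 < f e) by (apply Hr; lra). lra.
Qed.

Lemma crosses_upward_rescale (f F : R -> R) a z b s P : 0 < a <= z -> 0 < s -> 0 < P ->
  (forall x, 0 < x -> F (x * s) = f x / P) ->
  crosses_upward f a z b -> crosses_upward F (a * s) (z * s) (b * s).
Proof.
  intros Ha Hs HP HF [Hl [H0 Hr]].
  assert (Hresc : forall t, t = t / s * s) by (intros; field; lra).
  split; [| split].
  - intros t Ht. rewrite (Hresc t) in Ht |- *. set (x := t / s) in *.
    rewrite HF by nra. apply Rdiv_neg_pos; [apply Hl |]; nra.
  - rewrite HF by nra. rewrite H0. unfold Rdiv. ring.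
  - intros t Ht. rewrite (Hresc t) in Ht |- *. set (x := t / s) in *.
    rewrite HF by nra. apply Rdiv_lt_0_compat; [apply Hr |]; nra.
Qed.

Section PerturbedSimpleZero.

Variables (g g' h : R -> R) (m a C M c0 cd : R).
Hypotheses (Hma : m <= a) (HaC : a < C) (HCM : C < M) (Hcd : 0 < cd).
Hypothesis g_C : g C = 0.
Hypothesis g_left : forall x, m <= x <= a -> g x <= - c0.
Hypothesis g_right : c0 <= g M.
Hypothesis g_derive : forall x, a <= x <= M -> is_derive g x (g' x).
Hypothesis g'_ge : forall x, a <= x <= M -> cd <= g' x.
Hypothesis h_small : forall x, m <= x <= M -> Rabs (h x) < c0.
Hypothesis h_derive : forall x, a <= x <= M -> ex_derive h x.
Hypothesis h'_small : forall x, a <= x <= M -> Rabs (Derive h x) <= cd / 2.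

Lemma perturbed_increment y z : a <= y <= z -> z <= M ->
  cd / 2 * (z - y) <= (g z + h z) - (g y + h y).
Proof.
  apply (increment_ge_of_derive_ge (fun x => g x + h x) (fun x => g' x + Derive h x) a M).
  - intros t Ht. apply (is_derive_plus g h); [apply g_derive | apply Derive_correct, h_derive];
      assumption.
  - intros t Ht. pose proof (g'_ge t Ht). pose proof (h'_small t Ht) as Hh.
    apply Rabs_le_between in Hh. lra.
Qed.

Lemma perturbed_neg_left x : m <= x <= a -> g x + h x < 0.
Proof.
  intros Hx. pose proof (g_left x Hx). pose proof (h_small x ltac:(lra)) as Hh.
  apply Rabs_def2 in Hh. lra.
Qed.

Lemma perturbed_root_exists : exists z, a < z < M /\ g z + h z = 0.
Proof.
  assert (Ha : g a + h a < 0) by (apply perturbed_neg_left; lra).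
  assert (HM : 0 < g M + h M).
  { pose proof (h_small M ltac:(lra)) as Hh. apply Rabs_def2 in Hh. lra. }
  destruct (Ranalysis5.IVT_interv (fun x => g x + h x) a M) as [z [Hz Hroot]];
    [| lra | assumption | assumption |].
  - intros x Hx. apply derivable_continuous_pt. exists (g' x + Derive h x).
    apply is_derive_Reals, (is_derive_plus g h); [apply g_derive | apply Derive_correct, h_derive];
      assumption.
  - exists z. split; [| assumption].
    split; apply Rnot_le_lt; intros Hle.
    + replace z with a in Hroot by lra. lra.
    + replace z with M in Hroot by lra. lra.
Qed.

(* The root error comes from the slope of [g] alone: [g z = - h z] and [g C = 0]. *)
Lemma perturbed_crossing : exists z, a < z < M /\
  crosses_upward (fun x => g x + h x) m z M /\ cd * Rabs (z - C) <= Rabs (h z).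
Proof.
  destruct perturbed_root_exists as [z [Hz Hroot]].
  exists z. split; [assumption | split; [split; [| split] |]].
  - intros x Hx. destruct (Rle_lt_dec x a); [apply perturbed_neg_left; lra |].
    pose proof (perturbed_increment x z). assert (0 < cd / 2 * (z - x)) by nra. lra.
  - assumption.
  - intros x Hx. pose proof (perturbed_increment z x). assert (0 < cd / 2 * (x - z)) by nra. lra.
  - assert (Hgz : g z = - h z) by lra. rewrite <- (Rabs_Ropp (h z)), <- Hgz.
    destruct (Rle_lt_dec z C).
    + pose proof (increment_ge_of_derive_ge g g' a M cd z C g_derive g'_ge ltac:(lra) ltac:(lra)).
      assert (0 <= cd * (C - z)) by nra.
      rewrite Rabs_left1, (Rabs_left1 (g z)); lra.
    + pose proof (increment_ge_of_derive_ge g g' a M cd C z g_derive g'_ge ltac:(lra) ltac:(lra)).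
      assert (0 <= cd * (z - C)) by nra.
      rewrite Rabs_pos_eq, (Rabs_pos_eq (g z)); lra.
Qed.

End PerturbedSimpleZero.

Lemma compact_avoids_point (S : R -> Prop) c : Rtopology.compact S -> ~ S c ->
  exists d, 0 < d /\ forall x, S x -> d <= Rabs (x - c).
Proof.
  intros Hcomp Hc. destruct (Rtopology.compact_P2 S Hcomp c Hc) as [d Hd].
  exists d. split; [apply cond_pos |]. intros x Hx.
  destruct (Rle_lt_dec d (Rabs (x - c))) as [| Hlt]; [assumption |].
  exfalso. exact (Hd x Hlt Hx).
Qed.

Lemma ratio_error z C s cd E : 0 < s -> 0 < C -> 0 < cd -> cd * Rabs (z - C) <= E ->
  Rabs (z * s / (C * s) - 1) <= E / (cd * C).
Proof.
  intros Hs HC Hcd Herr.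
  replace (z * s / (C * s) - 1) with ((z - C) / C) by (field; lra).
  unfold Rdiv. rewrite Rabs_mult, Rabs_inv, (Rabs_pos_eq C), Rinv_mult by lra.
  apply (Rmult_le_reg_l (cd * C)); [nra |].
  replace (cd * C * (Rabs (z - C) * / C)) with (cd * Rabs (z - C)) by (field; lra).
  replace (cd * C * (E * (/ cd * / C))) with E by (field; lra).
  assumption.
Qed.

Lemma Delta_factor Delta D K p q B eps : 0 < B ->
  Delta eps B = Rpower eps (2 * p) *
    (D - K / B * Rpower eps (q - 2 * p) + remainder Delta D K p q eps B / Rpower eps (2 * p)).
Proof.
  intros HB. pose proof (Rpower_pos eps (2 * p)).
  unfold remainder, leading.
  replace (Rpower eps q) with (Rpower eps (2 * p) * Rpower eps (q - 2 * p))
    by (rewrite <- Rpower_plus; f_equal; ring).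
  field. lra.
Qed.

Lemma leading_coefficient_at_balance D K p q B : q = 2 * p ->
  at_right 0 (fun eps => D - K / B * Rpower eps (q - 2 * p) = D - K / B).
Proof.
  intros Hq. apply at_right_0_iff. exists 1. split; [lra |]. intros eps Heps.
  rewrite Hq, Rminus_diag, Rpower_O by lra. ring.
Qed.

Section RemainderNearZero.

Variables (Delta : R -> R -> R) (D K p q db dv e0 Cb Cv : R).
Hypotheses (He0 : 0 < e0) (Hdb : 0 < db) (Hdv : 0 < dv).
Hypothesis Hrem : forall B eps, 0 < B -> 0 < eps < e0 ->
  Rabs (remainder Delta D K p q eps B)
    <= Cb * Rpower eps (2 * p + db) + Cv * Rpower eps (q + dv) / B.

Lemma remainder_ratio_bound B eps : 0 < B -> 0 < eps < e0 ->
  Rabs (remainder Delta D K p q eps B / Rpower eps (2 * p))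
    <= Rabs Cb * Rpower eps db + Rabs Cv / B * Rpower eps (q - 2 * p + dv).
Proof.
  intros HB Heps. pose proof (Rpower_pos eps (2 * p)) as Hw.
  unfold Rdiv at 1. rewrite Rabs_mult, Rabs_inv, (Rabs_pos_eq (Rpower eps (2 * p))) by lra.
  apply (Rmult_le_reg_r (Rpower eps (2 * p))); [lra |].
  rewrite Rmult_assoc, Rinv_l, Rmult_1_r by lra.
  eapply Rle_trans; [apply Hrem; assumption |].
  rewrite Rpower_plus.
  replace (q + dv) with (2 * p + (q - 2 * p + dv)) by ring. rewrite Rpower_plus.
  pose proof (Rle_abs Cb) as HCb. pose proof (Rle_abs Cv) as HCv.
  pose proof (Rpower_pos eps db). pose proof (Rpower_pos eps (q - 2 * p + dv)).
  assert (HB' : 0 < / B) by (apply Rinv_0_lt_compat; lra).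
  set (w := Rpower eps (2 * p)) in *.
  set (u := Rpower eps db) in *. set (v := Rpower eps (q - 2 * p + dv)) in *.
  assert (Cb * (w * u) <= Rabs Cb * u * w) by (apply (Rmult_le_compat_r (w * u)) in HCb; nra).
  assert (Cv * (w * v) * / B <= Rabs Cv * / B * v * w)
    by (apply (Rmult_le_compat_r (w * v * / B)) in HCv; [nra | apply Rmult_le_pos; nra]).
  unfold Rdiv. lra.
Qed.

Lemma remainder_ratio_near_0 B e : 0 < B -> 2 * p <= q -> 0 < e ->
  at_right 0 (fun eps => Rabs (remainder Delta D K p q eps B / Rpower eps (2 * p)) < e).
Proof.
  intros HB Hqp He.
  assert (Hwindow : at_right 0 (fun eps => 0 < eps < e0))
    by (apply at_right_0_iff; exists e0; auto).
  assert (Hb : at_right 0 (fun eps => Rabs Cb * Rpower eps db < e / 2))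
    by (apply Rpower_small_near_0; [apply Rabs_pos | lra | lra]).
  assert (Hv : at_right 0 (fun eps => Rabs Cv / B * Rpower eps (q - 2 * p + dv) < e / 2)).
  { apply Rpower_small_near_0; [| lra | lra].
    apply Rdiv_le_0_compat; [apply Rabs_pos | lra]. }
  generalize (filter_and _ _ Hwindow (filter_and _ _ Hb Hv)).
  apply filter_imp. intros eps [Heps [H1 H2]].
  eapply Rle_lt_trans; [apply remainder_ratio_bound |]; lra.
Qed.

Lemma remainder_negligible_at_balance B : 0 < B -> q = 2 * p ->
  filterlim (fun eps => (Delta eps B - (D - K / B) * Rpower eps (2 * p)) / Rpower eps (2 * p))
    (at_right 0) (locally 0).
Proof.
  intros HB Hq. apply filterlim_locally. intros e.
  generalize (remainder_ratio_near_0 B e HB (Req_le_sym _ _ Hq) (cond_pos e)).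
  apply filter_imp. intros eps Hsmall.
  change (Rabs ((Delta eps B - (D - K / B) * Rpower eps (2 * p)) / Rpower eps (2 * p) - 0) < e).
  rewrite Rminus_0_r.
  replace (Delta eps B - (D - K / B) * Rpower eps (2 * p)) with (remainder Delta D K p q eps B);
    [assumption |].
  unfold remainder, leading. rewrite Hq. field. lra.
Qed.

Lemma Delta_pos_near_0 B c : 0 < B -> 2 * p <= q -> 0 < c ->
  at_right 0 (fun eps => c < D - K / B * Rpower eps (q - 2 * p)) ->
  at_right 0 (fun eps => 0 < Delta eps B).
Proof.
  intros HB Hqp Hc Hlead.
  generalize (filter_and _ _ Hlead (remainder_ratio_near_0 B c HB Hqp Hc)).
  apply filter_imp. intros eps [H1 H2]. apply Rabs_def2 in H2.
  rewrite (Delta_factor Delta D K p q B eps HB).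
  apply Rmult_lt_0_compat; [apply Rpower_pos | lra].
Qed.

Lemma Delta_neg_near_0 B c : 0 < B -> 2 * p <= q -> 0 < c ->
  at_right 0 (fun eps => D - K / B * Rpower eps (q - 2 * p) < - c) ->
  at_right 0 (fun eps => Delta eps B < 0).
Proof.
  intros HB Hqp Hc Hlead.
  generalize (filter_and _ _ Hlead (remainder_ratio_near_0 B c HB Hqp Hc)).
  apply filter_imp. intros eps [H1 H2]. apply Rabs_def2 in H2.
  rewrite (Delta_factor Delta D K p q B eps HB).
  pose proof (Rpower_pos eps (2 * p)). nra.
Qed.

Lemma Delta_sign_near_0_at_balance B : 0 < B -> q = 2 * p ->
  (0 < D - K / B -> at_right 0 (fun eps => 0 < Delta eps B)) /\
  (D - K / B < 0 -> at_right 0 (fun eps => Delta eps B < 0)).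
Proof.
  intros HB Hq. pose proof (leading_coefficient_at_balance D K p q B Hq) as Hlead.
  split; intros Hcoef.
  - apply (Delta_pos_near_0 B ((D - K / B) / 2)); [lra | lra | lra |].
    generalize Hlead. apply filter_imp. intros eps Heps. lra.
  - apply (Delta_neg_near_0 B ((K / B - D) / 2)); [lra | lra | lra |].
    generalize Hlead. apply filter_imp. intros eps Heps. lra.
Qed.

Lemma Delta_pos_near_0_above_balance B : 0 < D -> 0 <= K -> 0 < B -> 2 * p < q ->
  at_right 0 (fun eps => 0 < Delta eps B).
Proof.
  intros HD HK HB Hqp. apply (Delta_pos_near_0 B (D / 2)); [lra | lra | lra |].
  generalize (Rpower_small_near_0 (K / B) (q - 2 * p) (D / 2)
    ltac:(apply Rdiv_le_0_compat; lra) ltac:(lra) ltac:(lra)).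
  apply filter_imp. intros eps Heps. lra.
Qed.

End RemainderNearZero.

Lemma leading_coefficient_factor D K B : 0 < D -> 0 < B -> D - K / B = D / B * (B - K / D).
Proof. intros HD HB. field. lra. Qed.

Definition balance (D K p q x : R) : R := D * Rpower x (2 * p) - K * Rpower x q.

Definition balance_deriv (D K p q x : R) : R :=
  D * (2 * p * Rpower x (2 * p - 1)) - K * (q * Rpower x (q - 1)).

Lemma leading_rescaled D K p q B x : 0 < B -> 0 < x -> q <> 2 * p ->
  Rpower B (2 * p * rexp p q) * leading D K p q (x * Rpower B (- rexp p q)) B
  = balance D K p q x.
Proof.
  intros HB Hx Hqp. set (r := rexp p q).
  assert (Hs : 0 < Rpower B (- r)) by apply Rpower_pos.
  assert (Hbias : Rpower B (2 * p * r) * Rpower B (- r * (2 * p)) = 1).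
  { rewrite <- Rpower_plus. replace (2 * p * r + - r * (2 * p)) with 0 by ring.
    apply Rpower_O; lra. }
  assert (Hvar : Rpower B (2 * p * r) * Rpower B (- r * q) / B = 1).
  { unfold Rdiv. replace (/ B) with (Rpower B (- (1))) by (rewrite Rpower_Ropp, Rpower_1; auto).
    rewrite <- !Rpower_plus. replace (2 * p * r + - r * q + - (1)) with 0.
    - apply Rpower_O; lra.
    - unfold r, rexp. field. lra. }
  unfold leading, balance.
  rewrite <- !Rpower_mult_distr, !Rpower_mult by assumption.
  transitivity (D * Rpower x (2 * p) * (Rpower B (2 * p * r) * Rpower B (- r * (2 * p)))
    - K * Rpower x q * (Rpower B (2 * p * r) * Rpower B (- r * q) / B)).
  - field. lra.
  - rewrite Hbias, Hvar. ring.
Qed.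

Lemma Delta_rescaled Delta D K p q B x : 0 < B -> 0 < x -> q <> 2 * p ->
  Delta (x * Rpower B (- rexp p q)) B
  = (balance D K p q x + eta_resc Delta D K p q B x) / Rpower B (2 * p * rexp p q).
Proof.
  intros HB Hx Hqp. pose proof (Rpower_pos B (2 * p * rexp p q)).
  rewrite <- (leading_rescaled D K p q B x) by assumption.
  unfold eta_resc, remainder. field. lra.
Qed.

Lemma Cpq_pos D K p q : 0 < Cpq D K p q.
Proof. apply Rpower_pos. Qed.

Lemma Cpq_pow D K p q : 0 < D -> 0 < K -> q < 2 * p ->
  Rpower (Cpq D K p q) (2 * p - q) = K / D.
Proof.
  intros HD HK Hqp. unfold Cpq, rexp.
  rewrite Rpower_mult, Rinv_l, Rpower_1; [reflexivity | | lra].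
  apply Rdiv_lt_0_compat; assumption.
Qed.

Lemma Cpq_lt D K1 K2 p q : 0 < D -> 0 < K1 < K2 -> q < 2 * p ->
  Cpq D K1 p q < Cpq D K2 p q.
Proof.
  intros HD HK Hqp. unfold Cpq, rexp. apply Rlt_Rpower_l.
  - apply Rinv_0_lt_compat. lra.
  - split; [apply Rdiv_lt_0_compat; lra |].
    apply Rmult_lt_compat_r; [apply Rinv_0_lt_compat |]; lra.
Qed.

Section Balance.

Variables (D K p q : R).
Hypotheses (HD : 0 < D) (HK : 0 < K) (Hq : 0 <= q) (Hqp : q < 2 * p).

Lemma balance_factor x :
  balance D K p q x = Rpower x q * (D * Rpower x (2 * p - q) - K).
Proof.
  unfold balance. replace (2 * p) with (q + (2 * p - q)) at 1 by ring.
  rewrite Rpower_plus. ring.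
Qed.

Lemma balance_Cpq : balance D K p q (Cpq D K p q) = 0.
Proof. rewrite balance_factor, Cpq_pow by assumption. field. lra. Qed.

Lemma balance_neg_on a b : 0 < a <= b -> b < Cpq D K p q ->
  exists c, 0 < c /\ forall x, a <= x <= b -> balance D K p q x <= - c.
Proof.
  intros Hab HbC.
  assert (Hgap : D * Rpower b (2 * p - q) < K).
  { apply (Rmult_lt_reg_r (/ D)); [apply Rinv_0_lt_compat; lra |].
    replace (D * Rpower b (2 * p - q) * / D) with (Rpower b (2 * p - q)) by (field; lra).
    fold (K / D). rewrite <- (Cpq_pow D K p q) by assumption.
    apply Rlt_Rpower_l; lra. }
  exists (Rpower a q * (K - D * Rpower b (2 * p - q))).
  split; [apply Rmult_lt_0_compat; [apply Rpower_pos | lra] |].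
  intros x Hx. rewrite balance_factor.
  assert (Rpower x (2 * p - q) <= Rpower b (2 * p - q)) by (apply Rle_Rpower_l; lra).
  assert (Rpower a q <= Rpower x q) by (apply Rle_Rpower_l; lra).
  assert (D * Rpower x (2 * p - q) <= D * Rpower b (2 * p - q)) by (apply Rmult_le_compat_l; lra).
  pose proof (Rpower_pos x q). nra.
Qed.

Lemma balance_pos_from a : Cpq D K p q < a ->
  exists c, 0 < c /\ forall x, a <= x -> c <= balance D K p q x.
Proof.
  intros HCa. pose proof (Cpq_pos D K p q).
  assert (Hgap : K < D * Rpower a (2 * p - q)).
  { apply (Rmult_lt_reg_r (/ D)); [apply Rinv_0_lt_compat; lra |].
    replace (D * Rpower a (2 * p - q) * / D) with (Rpower a (2 * p - q)) by (field; lra).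
    fold (K / D). rewrite <- (Cpq_pow D K p q) by assumption.
    apply Rlt_Rpower_l; lra. }
  exists (Rpower a q * (D * Rpower a (2 * p - q) - K)).
  split; [apply Rmult_lt_0_compat; [apply Rpower_pos | lra] |].
  intros x Hx. rewrite balance_factor.
  assert (Rpower a (2 * p - q) <= Rpower x (2 * p - q)) by (apply Rle_Rpower_l; lra).
  assert (Rpower a q <= Rpower x q) by (apply Rle_Rpower_l; lra).
  assert (D * Rpower a (2 * p - q) <= D * Rpower x (2 * p - q)) by (apply Rmult_le_compat_l; lra).
  pose proof (Rpower_pos a q). nra.
Qed.

Lemma balance_is_derive x : 0 < x ->
  is_derive (balance D K p q) x (balance_deriv D K p q x).
Proof.
  intros Hx. unfold balance, balance_deriv.
  apply (is_derive_minus (fun y => D * Rpower y (2 * p)) (fun y => K * Rpower y q));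
    apply is_derive_scal, is_derive_Reals, derivable_pt_lim_power; assumption.
Qed.

Lemma balance_deriv_factor x :
  balance_deriv D K p q x = Rpower x (q - 1) * (2 * p * D * Rpower x (2 * p - q) - q * K).
Proof.
  unfold balance_deriv. replace (2 * p - 1) with ((q - 1) + (2 * p - q)) by ring.
  rewrite Rpower_plus. ring.
Qed.

Lemma balance_deriv_pos_on a b : 0 < a -> q * K < 2 * p * D * Rpower a (2 * p - q) ->
  exists c, 0 < c /\ forall x, a <= x <= b -> c <= balance_deriv D K p q x.
Proof.
  intros Ha Hslope.
  set (k := Rmin (Rpower a (q - 1)) (Rpower b (q - 1))).
  assert (Hk : 0 < k) by (apply Rmin_pos; apply Rpower_pos).
  exists (k * (2 * p * D * Rpower a (2 * p - q) - q * K)).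
  split; [apply Rmult_lt_0_compat; lra |].
  intros x Hx. rewrite balance_deriv_factor.
  assert (k <= Rpower x (q - 1)) by (apply Rpower_ge_min_endpoints; lra).
  assert (Rpower a (2 * p - q) <= Rpower x (2 * p - q)) by (apply Rle_Rpower_l; lra).
  assert (2 * p * D * Rpower a (2 * p - q) <= 2 * p * D * Rpower x (2 * p - q))
    by (apply Rmult_le_compat_l; nra).
  apply Rmult_le_compat; lra.
Qed.

(* [balance_deriv] is already positive from [Cpq D (th * K) p q] on, for any
   [q / (2p) < th < 1], and that point lies below [Cpq D K p q]. *)
Lemma balance_increasing_window m b : 0 < m < Cpq D K p q ->
  exists a c, m <= a < Cpq D K p q /\ 0 < c /\ forall x, a <= x <= b -> c <= balance_deriv D K p q x.
Proof.
  intros Hm. set (th := (2 * p + q) / (4 * p)).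
  assert (Hth : q / (2 * p) < th < 1).
  { unfold th. split; apply (Rmult_lt_reg_r (4 * p)); try lra;
      field_simplify; try lra. }
  assert (HthK : 0 < th * K) by (apply Rmult_lt_0_compat; [unfold th; apply Rdiv_lt_0_compat |]; lra).
  set (C' := Cpq D (th * K) p q).
  assert (HC' : C' < Cpq D K p q) by (apply Cpq_lt; [| split |]; nra).
  set (a := Rmax m C').
  assert (Hslope : q * K < 2 * p * D * Rpower a (2 * p - q)).
  { assert (HC'a : Rpower C' (2 * p - q) <= Rpower a (2 * p - q))
      by (apply Rle_Rpower_l; [lra | split; [apply Cpq_pos | apply Rmax_r]]).
    unfold C' in HC'a. rewrite Cpq_pow in HC'a by assumption.
    assert (Hlow : 2 * p * D * (th * K / D) <= 2 * p * D * Rpower a (2 * p - q))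
      by (apply Rmult_le_compat_l; nra).
    replace (2 * p * D * (th * K / D)) with ((2 * p + q) * K / 2) in Hlow
      by (unfold th; field; lra).
    nra. }
  destruct (balance_deriv_pos_on a b) as [c [Hc Hderiv]]; try assumption.
  { apply (Rlt_le_trans _ m); [lra | apply Rmax_l]. }
  exists a, c. repeat split; try assumption.
  - apply Rmax_l.
  - apply Rmax_lub_lt; lra.
Qed.

End Balance.

Section CrossingRegime.

Variables (Delta : R -> R -> R) (D K p q : R).
Hypotheses (HD : 0 < D) (HK : 0 < K) (Hq : 0 <= q) (Hqp : q < 2 * p).
Hypothesis Heta : forall a b e, 0 < a -> a <= b -> 0 < e -> exists B0, forall B x,
  B0 <= B -> a <= x <= b ->
  Rabs (eta_resc Delta D K p q B x) <= e /\
  ex_derive (eta_resc Delta D K p q B) x /\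
  Rabs (Derive (eta_resc Delta D K p q B) x) <= e.

Lemma Delta_crossing_of_rescaled B m z M : 0 < B -> 0 < m < z -> z < M ->
  crosses_upward (fun x => balance D K p q x + eta_resc Delta D K p q B x) m z M ->
  m * Rpower B (- rexp p q) <= z * Rpower B (- rexp p q) <= M * Rpower B (- rexp p q) /\
  sign_changing_crossing (fun eps => Delta eps B) (z * Rpower B (- rexp p q)) /\
  (forall e, m * Rpower B (- rexp p q) <= e <= M * Rpower B (- rexp p q) ->
     sign_changing_crossing (fun eps => Delta eps B) e -> e = z * Rpower B (- rexp p q)).
Proof.
  intros HB Hmz HzM Hcross. set (s := Rpower B (- rexp p q)).
  assert (Hs : 0 < s) by apply Rpower_pos.
  assert (HDcross : crosses_upward (fun eps => Delta eps B) (m * s) (z * s) (M * s)).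
  { apply (crosses_upward_rescale
      (fun x => balance D K p q x + eta_resc Delta D K p q B x) _ m z M s
      (Rpower B (2 * p * rexp p q)));
      [lra | assumption | apply Rpower_pos | | assumption].
    intros x Hx. apply Delta_rescaled; lra. }
  split; [split; nra | split].
  - apply (crosses_upward_sign_changing _ (m * s) _ (M * s)); [split; nra | assumption].
  - intros e He [Hroot _]. exact (crosses_upward_unique _ _ _ _ e HDcross He Hroot).
Qed.

Lemma rescaled_crossing m M : 0 < m < Cpq D K p q -> Cpq D K p q < M ->
  exists cd B0 (xB : R -> R), 0 < cd /\ 0 < B0 /\ forall B, B0 <= B ->
    m < xB B < M /\
    crosses_upward (fun x => balance D K p q x + eta_resc Delta D K p q B x) m (xB B) M /\
    cd * Rabs (xB B - Cpq D K p q) <= Rabs (eta_resc Delta D K p q B (xB B)).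
Proof.
  intros Hm HM.
  destruct (balance_increasing_window D K p q HD HK Hq Hqp m M Hm)
    as [a [cd [Ha [Hcd Hderiv]]]].
  destruct (balance_neg_on D K p q HD HK Hq Hqp m a) as [c1 [Hc1 Hleft]]; [lra | lra |].
  destruct (balance_pos_from D K p q HD HK Hq Hqp M HM) as [c2 [Hc2 Hright]].
  set (c0 := Rmin c1 c2).
  assert (Hc0 : 0 < c0) by (apply Rmin_pos; assumption).
  assert (Hc01 : c0 <= c1) by apply Rmin_l.
  assert (Hc02 : c0 <= c2) by apply Rmin_r.
  assert (Hsmall : 0 < Rmin c0 cd) by (apply Rmin_pos; assumption).
  pose proof (Rmin_l c0 cd). pose proof (Rmin_r c0 cd).
  destruct (Heta m M (Rmin c0 cd / 2)) as [B1 HB1]; [lra | lra | lra |].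
  assert (Hg_left : forall x, m <= x <= a -> balance D K p q x <= - c0).
  { intros x Hx. pose proof (Hleft x Hx). lra. }
  assert (Hg_right : c0 <= balance D K p q M).
  { pose proof (Hright M (Rle_refl M)). lra. }
  assert (Hg_derive : forall x, a <= x <= M ->
    is_derive (balance D K p q) x (balance_deriv D K p q x)).
  { intros x Hx. apply balance_is_derive. lra. }
  set (B0 := Rmax B1 1).
  assert (Hroot : forall B, exists z, B0 <= B -> m < z < M /\
    crosses_upward (fun x => balance D K p q x + eta_resc Delta D K p q B x) m z M /\
    cd * Rabs (z - Cpq D K p q) <= Rabs (eta_resc Delta D K p q B z)).
  { intros B. destruct (Rle_lt_dec B0 B) as [HB | HB]; [| exists 0; lra].
    assert (HB1B : B1 <= B) by (eapply Rle_trans; [apply Rmax_l | exact HB]).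
    assert (Hh_small : forall x, m <= x <= M -> Rabs (eta_resc Delta D K p q B x) < c0).
    { intros x Hx. destruct (HB1 B x HB1B Hx) as [Hh _]. lra. }
    assert (Hh_derive : forall x, a <= x <= M -> ex_derive (eta_resc Delta D K p q B) x).
    { intros x Hx. apply (HB1 B x HB1B). lra. }
    assert (Hh'_small : forall x, a <= x <= M ->
      Rabs (Derive (eta_resc Delta D K p q B) x) <= cd / 2).
    { intros x Hx. destruct (HB1 B x HB1B) as [_ [_ Hh']]; lra. }
    destruct (perturbed_crossing _ _ _ m a (Cpq D K p q) M c0 cd ltac:(lra) ltac:(lra) HM Hcd
      (balance_Cpq D K p q HD HK Hqp) Hg_left Hg_right Hg_derive Hderiv
      Hh_small Hh_derive Hh'_small) as [z [Hz Hcross]].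
    exists z. intros _. split; [lra | assumption]. }
  destruct (functional_choice _ Hroot) as [xB HxB].
  exists cd, B0, xB. split; [assumption | split; [| assumption]].
  apply (Rlt_le_trans _ 1); [lra | apply Rmax_r].
Qed.

Lemma local_crossing m M : 0 < m -> m < Cpq D K p q -> Cpq D K p q < M ->
  exists (epsloc : R -> R) (B0 : R),
    (forall B, B0 <= B ->
       m * Rpower B (- rexp p q) <= epsloc B <= M * Rpower B (- rexp p q) /\
       sign_changing_crossing (fun eps => Delta eps B) (epsloc B) /\
       (forall e, m * Rpower B (- rexp p q) <= e <= M * Rpower B (- rexp p q) ->
          sign_changing_crossing (fun eps => Delta eps B) e -> e = epsloc B)) /\
    is_lim (fun B => epsloc B / (Cpq D K p q * Rpower B (- rexp p q))) p_infty 1 /\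
    (forall eta, 0 < eta ->
       (forall a b, 0 < a -> a <= b -> exists Ce B1, forall B x,
           B1 <= B -> a <= x <= b ->
           Rabs (eta_resc Delta D K p q B x) <= Ce * Rpower B (- eta) /\
           ex_derive (eta_resc Delta D K p q B) x /\
           Rabs (Derive (eta_resc Delta D K p q B) x) <= Ce * Rpower B (- eta)) ->
       exists Ce B1, forall B, B1 <= B ->
         Rabs (epsloc B / (Cpq D K p q * Rpower B (- rexp p q)) - 1)
           <= Ce * Rpower B (- eta)).
Proof.
  intros Hm HmC HCM. pose proof (Cpq_pos D K p q) as HC.
  destruct (rescaled_crossing m M) as [cd [B0 [xB [Hcd [HB0 HxB]]]]]; [lra | assumption |].
  assert (Herr : forall B, B0 <= B ->
    Rabs (xB B * Rpower B (- rexp p q) / (Cpq D K p q * Rpower B (- rexp p q)) - 1)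
      <= Rabs (eta_resc Delta D K p q B (xB B)) / (cd * Cpq D K p q)).
  { intros B HB. apply ratio_error; [apply Rpower_pos | assumption | assumption |].
    apply (HxB B HB). }
  exists (fun B => xB B * Rpower B (- rexp p q)), B0. split; [| split].
  - intros B HB. destruct (HxB B HB) as [Hz [Hcross _]].
    apply Delta_crossing_of_rescaled; lra || assumption.
  - apply is_lim_spec. intros ep.
    assert (Hep : 0 < ep * (cd * Cpq D K p q))
      by (apply Rmult_lt_0_compat; [apply cond_pos | nra]).
    destruct (Heta m M (ep * (cd * Cpq D K p q) / 2)) as [B1 HB1]; [lra | lra | lra |].
    exists (Rmax B0 B1). intros B HB. simpl.
    pose proof (Rmax_l B0 B1). pose proof (Rmax_r B0 B1).
    destruct (HxB B ltac:(lra)) as [Hz _].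
    destruct (HB1 B (xB B) ltac:(lra) ltac:(lra)) as [Hsmall _].
    eapply Rle_lt_trans; [apply Herr; lra |].
    apply (Rmult_lt_reg_r (cd * Cpq D K p q)); [nra |].
    unfold Rdiv. rewrite Rmult_assoc, Rinv_l by nra. lra.
  - intros eta Heta_pos Hrate.
    destruct (Hrate m M Hm ltac:(lra)) as [Ce [B1 HB1]].
    exists (Ce / (cd * Cpq D K p q)), (Rmax B0 B1). intros B HB.
    pose proof (Rmax_l B0 B1). pose proof (Rmax_r B0 B1).
    destruct (HxB B ltac:(lra)) as [Hz _].
    destruct (HB1 B (xB B) ltac:(lra) ltac:(lra)) as [Hsmall _].
    eapply Rle_trans; [apply Herr; lra |].
    replace (Ce / (cd * Cpq D K p q) * Rpower B (- eta))
      with (Ce * Rpower B (- eta) / (cd * Cpq D K p q)) by (field; nra).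
    apply Rmult_le_compat_r; [| assumption].
    apply Rlt_le, Rinv_0_lt_compat. nra.
Qed.

Lemma sign_off_crossing (S : R -> Prop) : Rtopology.compact S ->
  (forall x, S x -> 0 < x) -> ~ S (Cpq D K p q) ->
  exists B0, forall B x, B0 <= B -> S x ->
    (x < Cpq D K p q -> Delta (x * Rpower B (- rexp p q)) B < 0) /\
    (Cpq D K p q < x -> 0 < Delta (x * Rpower B (- rexp p q)) B).
Proof.
  intros Hcomp Hpos HnotC. pose proof (Cpq_pos D K p q) as HC.
  destruct (compact_avoids_point S 0 Hcomp) as [d0 [Hd0 Hlow]].
  { intros HS0. specialize (Hpos 0 HS0). lra. }
  destruct (compact_avoids_point S _ Hcomp HnotC) as [d1 [Hd1 Hgap]].
  destruct (Rtopology.compact_P1 S Hcomp) as [m0 [M0 Hbound]].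
  set (dl := Rmin d1 (Cpq D K p q / 2)).
  assert (Hdl : 0 < dl <= d1 /\ dl <= Cpq D K p q / 2)
    by (split; [split; [apply Rmin_pos; lra | apply Rmin_l] | apply Rmin_r]).
  set (a := Rmin d0 (Cpq D K p q - dl)).
  assert (Ha : 0 < a <= d0 /\ a <= Cpq D K p q - dl)
    by (split; [split; [apply Rmin_pos; lra | apply Rmin_l] | apply Rmin_r]).
  destruct (balance_neg_on D K p q HD HK Hq Hqp a (Cpq D K p q - dl)) as [c1 [Hc1 Hleft]];
    [lra | lra |].
  destruct (balance_pos_from D K p q HD HK Hq Hqp (Cpq D K p q + dl)) as [c2 [Hc2 Hright]];
    [lra |].
  assert (Hc : 0 < Rmin c1 c2 /\ Rmin c1 c2 <= c1 /\ Rmin c1 c2 <= c2)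
    by (split; [apply Rmin_pos; lra | split; [apply Rmin_l | apply Rmin_r]]).
  destruct (Heta a (Rmax M0 a) (Rmin c1 c2 / 2)) as [B1 HB1]; [lra | apply Rmax_r | lra |].
  exists (Rmax B1 1). intros B x HB Hx.
  pose proof (Rmax_l B1 1). pose proof (Rmax_r B1 1).
  pose proof (Hpos x Hx) as Hx0. pose proof (Hlow x Hx) as Hxd0.
  pose proof (Hgap x Hx) as HxC. pose proof (Hbound x Hx) as HxM.
  rewrite Rminus_0_r, Rabs_pos_eq in Hxd0 by lra.
  destruct (HB1 B x ltac:(lra)) as [Heta_x _].
  { split; [lra | eapply Rle_trans; [apply HxM | apply Rmax_l]]. }
  apply Rabs_le_between in Heta_x.
  pose proof (Rpower_pos B (2 * p * rexp p q)) as HP.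
  rewrite (Delta_rescaled Delta D K p q) by lra.
  split; intros Hside.
  - rewrite Rabs_left in HxC by lra.
    pose proof (Hleft x ltac:(lra)). apply Rdiv_neg_pos; lra.
  - rewrite Rabs_pos_eq in HxC by lra.
    pose proof (Hright x ltac:(lra)). apply Rdiv_lt_0_compat; lra.
Qed.

End CrossingRegime.

Theorem theorem5
  (Delta : R -> R -> R) (D K p q db dv : R)
  (HD : 0 < D) (HK : 0 < K) (Hp : 1 <= p) (Hq : 0 <= q)
  (Hdb : 0 < db) (Hdv : 0 < dv)
  (* R_p(eps,B) = O(eps^(2p+db)) + O(eps^(q+dv)/B) near eps = 0, uniformly in B *)
  (Hrem : exists e0 Cb Cv, 0 < e0 /\ forall B eps, 0 < B -> 0 < eps < e0 ->
      Rabs (remainder Delta D K p q eps B)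
        <= Cb * Rpower eps (2 * p + db) + Cv * Rpower eps (q + dv) / B) :
  (* case (i) *)
  (q < 2 * p ->
   (* eta_B and its x-derivative -> 0 uniformly on compacts of (0,oo) *)
   (forall a b e, 0 < a -> a <= b -> 0 < e -> exists B0, forall B x,
       B0 <= B -> a <= x <= b ->
       Rabs (eta_resc Delta D K p q B x) <= e /\
       ex_derive (eta_resc Delta D K p q B) x /\
       Rabs (Derive (eta_resc Delta D K p q B) x) <= e) ->
   (forall m M, 0 < m -> m < Cpq D K p q -> Cpq D K p q < M ->
     exists (epsloc : R -> R) (B0 : R),
       (forall B, B0 <= B ->
          m * Rpower B (- rexp p q) <= epsloc B <= M * Rpower B (- rexp p q) /\
          sign_changing_crossing (fun eps => Delta eps B) (epsloc B) /\
          (forall e, m * Rpower B (- rexp p q) <= e <= M * Rpower B (- rexp p q) ->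
             sign_changing_crossing (fun eps => Delta eps B) e -> e = epsloc B)) /\
       is_lim (fun B => epsloc B / (Cpq D K p q * Rpower B (- rexp p q))) p_infty 1 /\
       (forall eta, 0 < eta ->
          (forall a b, 0 < a -> a <= b -> exists Ce B1, forall B x,
              B1 <= B -> a <= x <= b ->
              Rabs (eta_resc Delta D K p q B x) <= Ce * Rpower B (- eta) /\
              ex_derive (eta_resc Delta D K p q B) x /\
              Rabs (Derive (eta_resc Delta D K p q B) x) <= Ce * Rpower B (- eta)) ->
          exists Ce B1, forall B, B1 <= B ->
            Rabs (epsloc B / (Cpq D K p q * Rpower B (- rexp p q)) - 1)
              <= Ce * Rpower B (- eta))) /\
   (forall Kset : R -> Prop, Rtopology.compact Kset ->
      (forall x, Kset x -> 0 < x) -> ~ Kset (Cpq D K p q) ->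
      exists B0, forall B x, B0 <= B -> Kset x ->
        (x < Cpq D K p q -> Delta (x * Rpower B (- rexp p q)) B < 0) /\
        (Cpq D K p q < x -> 0 < Delta (x * Rpower B (- rexp p q)) B)))
  /\
  (* case (ii) *)
  (q = 2 * p ->
   (forall B, 0 < B ->
      filterlim (fun eps => (Delta eps B - (D - K / B) * Rpower eps (2 * p))
                          / Rpower eps (2 * p)) (at_right 0) (locally 0)) /\
   (forall B, K / D < B ->
      exists e0, 0 < e0 /\ forall eps, 0 < eps < e0 -> 0 < Delta eps B) /\
   (forall B, 0 < B -> B < K / D ->
      exists e0, 0 < e0 /\ forall eps, 0 < eps < e0 -> Delta eps B < 0))
  /\
  (* case (iii) *)
  (2 * p < q ->
   exists B0, forall B, B0 <= B ->
     exists e0, 0 < e0 /\ forall eps, 0 < eps < e0 -> 0 < Delta eps B).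
Proof.
  (* [Hp] is not needed: case (i) only uses [p > 0], which follows from [0 <= q < 2p]. *)
  destruct Hrem as [e0 [Cb [Cv [He0 Hbound]]]].
  split; [| split].
  - intros Hqp Heta. split.
    + exact (local_crossing Delta D K p q HD HK Hq Hqp Heta).
    + exact (sign_off_crossing Delta D K p q HD HK Hq Hqp Heta).
  - intros Hbal. split; [| split].
    + intros B HB. exact (remainder_negligible_at_balance Delta D K p q db dv e0 Cb Cv
        He0 Hdb Hdv Hbound B HB Hbal).
    + intros B HB. assert (HB0 : 0 < B) by (pose proof (Rdiv_lt_0_compat K D HK HD); lra).
      apply at_right_0_iff.
      apply (Delta_sign_near_0_at_balance Delta D K p q db dv e0 Cb Cv He0 Hdb Hdv Hbound
        B HB0 Hbal).
      rewrite leading_coefficient_factor by assumption.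
      apply Rmult_lt_0_compat; [apply Rdiv_lt_0_compat |]; lra.
    + intros B HB0 HB. apply at_right_0_iff.
      apply (Delta_sign_near_0_at_balance Delta D K p q db dv e0 Cb Cv He0 Hdb Hdv Hbound
        B HB0 Hbal).
      rewrite leading_coefficient_factor by assumption.
      pose proof (Rdiv_lt_0_compat D B HD HB0). nra.
  - intros Hqp. exists 1. intros B HB. apply at_right_0_iff.
    apply (Delta_pos_near_0_above_balance Delta D K p q db dv e0 Cb Cv He0 Hdb Hdv Hbound);
      lra.
Qed.
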